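(* Let $m=2k+1$ with $k\in\mathbb{N}$. For every $\beta\in(1,\frac{k+1+\sqrt{k^2+6k+5}}{2})$, every $x\in(0,\frac{m}{\beta-1})$ has uncountably many $\beta$-expansions, i.e. $\Sigma_{\beta,m}(x)$ is uncountable.
   Context: $\Sigma_{\beta,m}(x)=\{(\epsilon_i)_{i=1}^\infty\in\{0,\ldots,m\}^{\mathbb{N}}:\sum_{i\ge1}\epsilon_i\beta^{-i}=x\}$; its elements are the $\beta$-expansions of $x$. *)

From Stdlib Require Import Reals.
Open Scope R_scope.

(* A sequence eps : nat -> nat encodes (epsilon_i)_{i>=1} via epsilon_{i} = eps (i-1).
   beta_expansion beta m x eps  <->  eps in Sigma_{beta,m}(x):
   all digits in {0,...,m} and sum_{i>=1} epsilon_i beta^{-i} = x. *)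
Definition beta_expansion (beta : R) (m : nat) (x : R) (eps : nat -> nat) : Prop :=
  (forall i, (eps i <= m)%nat) /\
  infinite_sum (fun i => INR (eps i) / beta ^ (S i)) x.

Definition countable_set (S : (nat -> nat) -> Prop) : Prop :=
  exists f : (nat -> nat) -> nat,
    forall a b, S a -> S b -> f a = f b -> a = b.

From Stdlib Require Import Reals Lra Lia ClassicalEpsilon FunctionalExtensionality.
Open Scope R_scope.

(* Put M = m / (beta - 1) and call a digit d admissible at x in (0, M) when
   beta x - d stays in (0, M); x is branching when it has two admissible digits.
   Admissible digits always exist, and following them from x yields an expansion
   of x.  Choosing one of the two digits at each branching point visited embeds
   {0,1}^N into the expansions of x, as soon as every orbit keeps meeting
   branching points.  For m = 2k + 1 the bound on beta is equivalent to
   beta < k + M; then all of [M - 1, 1] branches on the digits k and k + 1, a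
   non-branching point with an interior digit is mapped into [M - 1, 1], and the
   extreme digits 0 and m push points away from the endpoints 0 and M. *)

Lemma exists_pow_gt_inv (b y : R) : 1 < b -> 0 < y -> exists n, 1 < b ^ n * y.
Proof.
  intros Hb Hy.
  destruct (Pow_x_infinity b ltac:(rewrite Rabs_pos_eq; lra) (2 / y)) as [N HN].
  exists N. specialize (HN N (le_n N)).
  rewrite Rabs_pos_eq in HN by (apply pow_le; lra).
  apply Rge_le, (Rmult_le_compat_r y) in HN; [|lra].
  unfold Rdiv in HN. rewrite Rmult_assoc, Rinv_l in HN; lra.
Qed.

Lemma infinite_sum_of_remainders (beta B : R) (d : nat -> nat) (r : nat -> R) :
  1 < beta -> (forall n, 0 <= r n <= B) ->
  (forall n, r (S n) = beta * r n - INR (d n)) ->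
  infinite_sum (fun i => INR (d i) / beta ^ S i) (r O).
Proof.
  intros Hb Hr Hstep.
  assert (Hpartial : forall n,
    r O = sum_f_R0 (fun i => INR (d i) / beta ^ S i) n + r (S n) / beta ^ S n).
  { induction n as [|n IH]; simpl sum_f_R0; rewrite Hstep.
    - simpl. field. lra.
    - rewrite IH, Hstep. assert (beta ^ n <> 0) by (apply pow_nonzero; lra).
      simpl. field. split; lra. }
  intros eps Heps.
  assert (Hinv : Rabs (/ beta) < 1).
  { rewrite Rabs_pos_eq by (left; apply Rinv_0_lt_compat; lra).
    rewrite <- Rinv_1. apply Rinv_lt_contravar; lra. }
  destruct (pow_lt_1_zero _ Hinv (eps / (B + 1))) as [N HN].
  { pose proof (Hr O). apply Rdiv_lt_0_compat; lra. }
  exists N. intros n Hn. unfold R_dist.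
  rewrite (Hpartial n) at 1.
  specialize (HN (S n) ltac:(lia)). specialize (Hr (S n)).
  rewrite pow_inv, Rabs_inv, Rabs_pos_eq in HN by (try apply pow_le; try apply pow_nonzero; lra).
  assert (Hp : 0 < / beta ^ S n) by (apply Rinv_0_lt_compat, pow_lt; lra).
  replace (_ - _) with (- (r (S n) * / beta ^ S n)) by (unfold Rdiv; ring).
  rewrite Rabs_Ropp, Rabs_pos_eq by nra.
  replace eps with ((B + 1) * (eps / (B + 1))) by (field; lra).
  nra.
Qed.

Lemma bool_sequences_not_countable (h : (nat -> bool) -> nat) :
  ~ (forall s s', h s = h s' -> s = s').
Proof.
  intros Hinj.
  set (inv n := epsilon (inhabits (fun _ : nat => false)) (fun s => h s = n)).
  set (diag n := negb (inv n n)).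
  assert (Hinv : inv (h diag) = diag)
    by (apply Hinj, epsilon_spec; exists diag; reflexivity).
  assert (Hd : diag (h diag) = negb (inv (h diag) (h diag))) by reflexivity.
  rewrite Hinv in Hd. destruct (diag (h diag)); discriminate.
Qed.

Lemma exists_nat_floor (N : nat) (y : R) :
  0 < y -> y <= INR N + 1 -> exists n, (n <= N)%nat /\ INR n < y <= INR n + 1.
Proof.
  induction N as [|N IH]; intros Hy HyN.
  - exists O. simpl in *. split; [lia | lra].
  - destruct (Rle_lt_dec y (INR N + 1)) as [H|H].
    + destruct (IH Hy H) as [n [Hn Hny]]. exists n. split; [lia | exact Hny].
    + exists (S N). rewrite S_INR in *. split; [lia | lra].
Qed.

Definition expansion_sup (beta : R) (m : nat) : R := INR m / (beta - 1).

Definition admissible (beta : R) (m : nat) (x : R) (d : nat) : Prop :=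
  (d <= m)%nat /\ 0 < beta * x - INR d < expansion_sup beta m.

Definition branching (beta : R) (m : nat) (x : R) : Prop :=
  exists d d', (d < d')%nat /\ admissible beta m x d /\ admissible beta m x d'.

Section Admissible.

Variables (beta : R) (m : nat).
Hypothesis beta_gt1 : 1 < beta.

Local Notation M := (expansion_sup beta m).
Local Notation admissible := (admissible beta m).
Local Notation branching := (branching beta m).

Lemma expansion_sup_fixed : beta * M - INR m = M.
Proof. unfold expansion_sup. field. lra. Qed.

Lemma admissible_exists (x : R) : 1 < M -> 0 < x < M -> exists d, admissible x d.
Proof.
  intros HM Hx.
  assert (HbM : beta * x < beta * M) by (apply Rmult_lt_compat_l; lra).
  pose proof expansion_sup_fixed.
  destruct (Rle_lt_dec (beta * x) (INR m + 1)) as [Hle|Hgt].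
  - destruct (exists_nat_floor m (beta * x)) as [d [Hdm Hd]]; [nra | exact Hle |].
    exists d. split; [exact Hdm | lra].
  - exists m. split; [lia | lra].
Qed.

Lemma admissible_unique (x : R) (d d' : nat) :
  ~ branching x -> admissible x d -> admissible x d' -> d = d'.
Proof.
  intros Hnb Hd Hd'. destruct (Nat.lt_total d d') as [H|[H|H]]; [| exact H |];
  exfalso; apply Hnb; [exists d, d' | exists d', d]; auto.
Qed.

Lemma nonbranching_lower (x : R) (d : nat) :
  ~ branching x -> admissible x d -> (1 <= d)%nat -> M - 1 <= beta * x - INR d.
Proof.
  intros Hnb [Hdm Hd] Hd1.
  destruct (Rle_lt_dec (M - 1) (beta * x - INR d)) as [H|H]; [exact H | exfalso].
  apply Hnb. exists (d - 1)%nat, d. repeat split; try lia; try lra;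
  rewrite minus_INR by lia; simpl; lra.
Qed.

Lemma nonbranching_upper (x : R) (d : nat) :
  ~ branching x -> admissible x d -> (d < m)%nat -> beta * x - INR d <= 1.
Proof.
  intros Hnb [Hdm Hd] Hdm'.
  destruct (Rle_lt_dec (beta * x - INR d) 1) as [H|H]; [exact H | exfalso].
  apply Hnb. exists d, (d + 1)%nat. repeat split; try lia; try lra;
  rewrite plus_INR; simpl; lra.
Qed.

End Admissible.

Inductive reaches_branching (beta : R) (m : nat) : R -> Prop :=
  | reaches_here x : branching beta m x -> reaches_branching beta m x
  | reaches_step x d : ~ branching beta m x -> admissible beta m x d ->
      reaches_branching beta m (beta * x - INR d) -> reaches_branching beta m x.

Section BranchingTree.

Variables (beta : R) (m : nat).
Hypothesis beta_gt1 : 1 < beta.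
Hypothesis sup_gt1 : 1 < expansion_sup beta m.

Local Notation M := (expansion_sup beta m).
Local Notation admissible := (admissible beta m).
Local Notation branching := (branching beta m).

Definition digit_pair (x : R) : nat * nat :=
  epsilon (inhabits (O, O)) (fun p =>
    admissible x (fst p) /\ admissible x (snd p) /\ (branching x -> (fst p < snd p)%nat)).

Definition choose_digit (x : R) (b : bool) : nat :=
  if b then snd (digit_pair x) else fst (digit_pair x).

Lemma digit_pair_spec (x : R) : 0 < x < M ->
  admissible x (fst (digit_pair x)) /\ admissible x (snd (digit_pair x)) /\
  (branching x -> (fst (digit_pair x) < snd (digit_pair x))%nat).
Proof.
  intros Hx. unfold digit_pair. apply epsilon_spec.
  destruct (classic (branching x)) as [[d [d' [Hlt [Hd Hd']]]] | Hnb].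
  - exists (d, d'). auto.
  - destruct (admissible_exists beta m beta_gt1 x sup_gt1 Hx) as [d Hd].
    exists (d, d). simpl. tauto.
Qed.

Lemma choose_digit_admissible (x : R) (b : bool) : 0 < x < M -> admissible x (choose_digit x b).
Proof. intros Hx. destruct (digit_pair_spec x Hx) as [H0 [H1 _]]. now destruct b. Qed.

Lemma choose_digit_inj (x : R) (b b' : bool) : 0 < x < M -> branching x ->
  choose_digit x b = choose_digit x b' -> b = b'.
Proof.
  intros Hx Hb. destruct (digit_pair_spec x Hx) as [_ [_ Hlt]]. specialize (Hlt Hb).
  unfold choose_digit. destruct b, b'; auto; lia.
Qed.

Lemma choose_digit_nonbranching (x : R) (b : bool) (d : nat) : 0 < x < M ->
  ~ branching x -> admissible x d -> choose_digit x b = d.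
Proof.
  intros Hx Hnb Hd. apply (admissible_unique beta m x _ _ Hnb); [|exact Hd].
  now apply choose_digit_admissible.
Qed.

(* A state is a point together with the bits still to be spent; a bit is spent
   exactly at the branching points. *)
Definition tree_step (p : R * (nat -> bool)) : R * (nat -> bool) :=
  (beta * fst p - INR (choose_digit (fst p) (snd p O)),
   if excluded_middle_informative (branching (fst p))
   then fun n => snd p (S n) else snd p).

Definition tree_expansion (p : R * (nat -> bool)) (n : nat) : nat :=
  let q := Nat.iter n tree_step p in choose_digit (fst q) (snd q O).

Lemma tree_step_branching (x : R) (s : nat -> bool) : branching x ->
  tree_step (x, s) = (beta * x - INR (choose_digit x (s O)), fun n => s (S n)).
Proof.
  intros Hb. unfold tree_step. simpl.
  now destruct (excluded_middle_informative (branching x)).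
Qed.

Lemma tree_step_nonbranching (x : R) (s : nat -> bool) : ~ branching x ->
  tree_step (x, s) = (beta * x - INR (choose_digit x (s O)), s).
Proof.
  intros Hnb. unfold tree_step. simpl.
  now destruct (excluded_middle_informative (branching x)).
Qed.

Lemma tree_expansion_succ (p : R * (nat -> bool)) (n : nat) :
  tree_expansion p (S n) = tree_expansion (tree_step p) n.
Proof. unfold tree_expansion. now rewrite Nat.iter_succ_r. Qed.

Lemma tree_orbit_bounded (p : R * (nat -> bool)) : 0 < fst p < M ->
  forall n, 0 < fst (Nat.iter n tree_step p) < M.
Proof.
  intros Hp n. induction n as [|n IH]; [exact Hp|].
  simpl. apply (choose_digit_admissible _ _ IH).
Qed.

Lemma tree_expansion_is_expansion (x : R) (s : nat -> bool) : 0 < x < M ->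
  beta_expansion beta m x (tree_expansion (x, s)).
Proof.
  intros Hx. pose proof (tree_orbit_bounded (x, s) Hx) as Horbit. split.
  - intros n. apply (choose_digit_admissible _ _ (Horbit n)).
  - apply (infinite_sum_of_remainders beta M _ (fun n => fst (Nat.iter n tree_step (x, s))));
      [exact beta_gt1 | | reflexivity].
    intros n. specialize (Horbit n). lra.
Qed.

Hypothesis every_point_reaches : forall x, 0 < x < M -> reaches_branching beta m x.

Lemma tree_expansion_eq_head (x : R) (s s' : nat -> bool) : 0 < x < M ->
  (forall n, tree_expansion (x, s) n = tree_expansion (x, s') n) ->
  s O = s' O /\ exists y, 0 < y < M /\
    forall n, tree_expansion (y, fun i => s (S i)) n = tree_expansion (y, fun i => s' (S i)) n.
Proof.
  intros Hx. revert s s'.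
  induction (every_point_reaches x Hx) as [x Hb | x d Hnb Hd _ IH]; intros s s' Heq.
  - pose proof (Heq O) as Hdigit. unfold tree_expansion in Hdigit. simpl in Hdigit.
    split; [exact (choose_digit_inj x _ _ Hx Hb Hdigit)|].
    exists (beta * x - INR (choose_digit x (s O))).
    split; [apply (choose_digit_admissible _ _ Hx)|].
    intros n. specialize (Heq (S n)).
    rewrite !tree_expansion_succ, !tree_step_branching, <- Hdigit in Heq by exact Hb.
    exact Heq.
  - assert (Hdigit : forall b, choose_digit x b = d) by (intros; now apply choose_digit_nonbranching).
    apply IH; [apply Hd|]. intros n. specialize (Heq (S n)).
    rewrite !tree_expansion_succ, !tree_step_nonbranching, !Hdigit in Heq by exact Hnb.
    exact Heq.
Qed.

Lemma tree_expansion_inj (x : R) (s s' : nat -> bool) : 0 < x < M ->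
  tree_expansion (x, s) = tree_expansion (x, s') -> s = s'.
Proof.
  intros Hx Heq. apply functional_extensionality. intros i.
  assert (Hpt : forall n, tree_expansion (x, s) n = tree_expansion (x, s') n) by now rewrite Heq.
  clear Heq. revert x s s' Hx Hpt. induction i as [|i IH]; intros x s s' Hx Hpt;
  destruct (tree_expansion_eq_head x s s' Hx Hpt) as [H0 [y [Hy Htail]]]; [exact H0|].
  exact (IH y _ _ Hy Htail).
Qed.

Theorem expansions_uncountable_of_reaching (x : R) : 0 < x < M ->
  ~ countable_set (beta_expansion beta m x).
Proof.
  intros Hx [f Hf].
  apply (bool_sequences_not_countable (fun s => f (tree_expansion (x, s)))).
  intros s s' Hfs. apply (tree_expansion_inj x s s' Hx).
  apply Hf; [apply tree_expansion_is_expansion.. | exact Hfs]; exact Hx.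
Qed.

End BranchingTree.

Section OddDigitSet.

Variables (beta : R) (k : nat).
Hypothesis beta_gt1 : 1 < beta.

Local Notation m := (2 * k + 1)%nat.
Local Notation M := (expansion_sup beta m).
Local Notation admissible := (admissible beta m).
Local Notation branching := (branching beta m).
Local Notation reaches_branching := (reaches_branching beta m).

Hypothesis beta_lt_k_add_sup : beta < INR k + M.

Let INR_m : INR m = 2 * INR k + 1.
Proof. rewrite plus_INR, mult_INR. simpl. ring. Qed.

Let sup_fixed : beta * M - INR m = M := expansion_sup_fixed beta m beta_gt1.

Lemma odd_sup_gt1 : 1 < M.
Proof.
  pose proof (pos_INR k). pose proof beta_lt_k_add_sup.
  pose proof sup_fixed as Hfix. rewrite INR_m in Hfix. nra.
Qed.

Lemma middle_branching (x : R) : M - 1 <= x <= 1 -> branching x.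
Proof.
  intros Hx. pose proof (pos_INR k). pose proof beta_lt_k_add_sup.
  pose proof sup_fixed as Hfix. rewrite INR_m in Hfix.
  exists k, (k + 1)%nat. unfold admissible.
  rewrite plus_INR, INR_1. repeat split; try lia; nra.
Qed.

Lemma reaches_or_extreme_digit (x : R) : 0 < x < M ->
  reaches_branching x \/ (~ branching x /\ (admissible x 0 \/ admissible x m)).
Proof.
  intros Hx. destruct (classic (branching x)) as [Hb | Hnb]; [left; now constructor|].
  destruct (admissible_exists beta m beta_gt1 x odd_sup_gt1 Hx) as [j Hj].
  destruct (Nat.eq_dec j 0) as [-> | Hj0]; [right; auto|].
  destruct (Nat.eq_dec j m) as [-> | Hjm]; [right; auto|].
  left. apply (reaches_step beta m x j Hnb Hj), reaches_here, middle_branching.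
  split; [apply (nonbranching_lower beta m x j Hnb Hj); lia|].
  apply (nonbranching_upper beta m x j Hnb Hj). destruct Hj. lia.
Qed.

Lemma reaches_low (n : nat) (x : R) : 0 < x <= 1 -> 1 < beta ^ n * x -> reaches_branching x.
Proof.
  pose proof (pos_INR k). pose proof odd_sup_gt1. pose proof beta_lt_k_add_sup. pose proof sup_fixed.
  revert x. induction n as [|n IH]; intros x Hx Hn; [rewrite pow_O in Hn; lra|].
  destruct (reaches_or_extreme_digit x) as [| [Hnb [Hzero | Htop]]]; [lra | assumption | |].
  - apply (reaches_step beta m x 0 Hnb Hzero), IH.
    + pose proof (nonbranching_upper beta m x 0 Hnb Hzero ltac:(lia)). destruct Hzero. lra.
    + rewrite <- tech_pow_Rmult in Hn. change (INR 0) with 0. lra.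
  - exfalso. pose proof (nonbranching_lower beta m x m Hnb Htop ltac:(lia)).
    rewrite INR_m in *. nra.
Qed.

Lemma reaches_high (n : nat) (x : R) : M - 1 <= x < M -> 1 < beta ^ n * (M - x) ->
  reaches_branching x.
Proof.
  pose proof (pos_INR k). pose proof odd_sup_gt1. pose proof beta_lt_k_add_sup. pose proof sup_fixed.
  revert x. induction n as [|n IH]; intros x Hx Hn; [rewrite pow_O in Hn; lra|].
  destruct (reaches_or_extreme_digit x) as [| [Hnb [Hzero | Htop]]]; [lra | assumption | |].
  - exfalso. pose proof (nonbranching_upper beta m x 0 Hnb Hzero ltac:(lia)).
    rewrite INR_m in *. change (INR 0) with 0 in *. nra.
  - apply (reaches_step beta m x m Hnb Htop), IH.
    + pose proof (nonbranching_lower beta m x m Hnb Htop ltac:(lia)). destruct Htop. lra.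
    + rewrite <- tech_pow_Rmult in Hn.
      replace (M - (beta * x - INR m)) with (beta * (M - x)) by lra. lra.
Qed.

Lemma odd_reaches_branching (x : R) : 0 < x < M -> reaches_branching x.
Proof.
  intros Hx. pose proof odd_sup_gt1.
  destruct (reaches_or_extreme_digit x Hx) as [| [Hnb [Hzero | Htop]]]; [assumption | |].
  - apply (reaches_step beta m x 0 Hnb Hzero).
    pose proof (nonbranching_upper beta m x 0 Hnb Hzero ltac:(lia)). destruct Hzero as [_ Hzero].
    destruct (exists_pow_gt_inv beta (beta * x - INR 0) beta_gt1 ltac:(lra)) as [n Hn].
    apply (reaches_low n); lra.
  - apply (reaches_step beta m x m Hnb Htop).
    pose proof (nonbranching_lower beta m x m Hnb Htop ltac:(lia)). destruct Htop as [_ Htop].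
    destruct (exists_pow_gt_inv beta (M - (beta * x - INR m)) beta_gt1 ltac:(lra)) as [n Hn].
    apply (reaches_high n); lra.
Qed.

End OddDigitSet.

(* beta lies below the positive root of t^2 - (k + 1) t - (k + 1), which is
   exactly the condition beta < k + m / (beta - 1). *)
Lemma lt_k_add_sup_of_lt_root (beta : R) (k : nat) : 1 < beta ->
  beta < (INR k + 1 + sqrt (INR k ^ 2 + 6 * INR k + 5)) / 2 ->
  beta < INR k + expansion_sup beta (2 * k + 1).
Proof.
  intros Hb Hroot. pose proof (pos_INR k) as Hk. set (K := INR k) in *.
  set (D := K ^ 2 + 6 * K + 5) in *.
  assert (HD : 0 <= D) by (unfold D; nra).
  pose proof (sqrt_sqrt D HD). pose proof (sqrt_pos D).
  assert (Hquad : beta * beta < (K + 1) * (beta + 1)).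
  { assert (Hsq : (2 * beta - K - 1) * (2 * beta - K - 1) < D).
    { destruct (Rle_lt_dec 0 (2 * beta - K - 1)); [nra | unfold D; nra]. }
    unfold D in Hsq. nra. }
  assert (Hsup : expansion_sup beta (2 * k + 1) * (beta - 1) = 2 * K + 1).
  { unfold expansion_sup. rewrite plus_INR, mult_INR. simpl. fold K. field. lra. }
  nra.
Qed.

Theorem proposition3p6 (k : nat) (beta x : R) :
  1 < beta ->
  beta < (INR k + 1 + sqrt (INR k ^ 2 + 6 * INR k + 5)) / 2 ->
  0 < x -> x < INR (2 * k + 1) / (beta - 1) ->
  ~ countable_set (beta_expansion beta (2 * k + 1) x).
Proof.
  intros Hb Hroot Hx0 Hx1.
  pose proof (lt_k_add_sup_of_lt_root beta k Hb Hroot) as Hsup.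
  apply (expansions_uncountable_of_reaching beta (2 * k + 1) Hb).
  - exact (odd_sup_gt1 beta k Hb Hsup).
  - exact (odd_reaches_branching beta k Hb Hsup).
  - split; assumption.
Qed.
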